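(* Fix an integer $r\ge1$, let $\mathrm{J}=e^{2\pi\mathrm{I}/r}$ with $\mathrm{I}^2=-1$, and consider the curve $x=-y^r+\log y$, i.e. $e^x=ye^{-y^r}$, near $y=0$. For $i\in\{0,\dots,r-1\}$ define $$\xi_i=\frac{\mathrm{I}\sqrt2\,r^{-\frac12-\frac1r}\mathrm{J}^i}{r^{-1/r}\mathrm{J}^i-y},$$ and for $a\in\{0,\dots,r-1\}$ define $\tilde\xi_a=\sum_{i=0}^{r-1}r^{-1}\mathrm{J}^{-(a+1)i}\xi_i$. Then, as functions of $x$ expanded near $y=0$, $$\tilde\xi_a=\mathrm{I}\sqrt2\,r^{\frac12-\frac{a+1}r}\sum_{n=0}^\infty\frac{(rn+r-a-1)^n}{n!}e^{(rn+r-a-1)x}.$$ *)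

From Stdlib Require Import Reals.
From Coquelicot Require Import Coquelicot.
Open Scope R_scope.

Definition Cexp (z : C) : C :=
  (exp (Re z) * cos (Im z), exp (Re z) * sin (Im z)).

Definition CI : C := (0, 1).

Definition J (r : nat) : C := (cos (2 * PI / INR r), sin (2 * PI / INR r)).

Definition xi (r i : nat) (y : C) : C :=
  (CI * RtoC (sqrt 2) * RtoC (Rpower (INR r) (- / 2 - / INR r)) * Cpow (J r) i
   / (RtoC (Rpower (INR r) (- / INR r)) * Cpow (J r) i - y))%C.

Definition xi_tilde (r a : nat) (y : C) : C :=
  @sum_n C_AbelianMonoid
    (fun i => (/ RtoC (INR r) * Cpow (/ J r) ((a + 1) * i) * xi r i y)%C)
    (r - 1).

(* Put [u = y^r] and [c = r - a - 1].  On the curve, [e^((r n + c) x)] equals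
   [y^c u^n e^(-(r n + c) u)], so the series is [y^c] times
   [sum_n ((r n + c) u)^n / n! e^(-(r n + c) u)].  Expanding the exponentials and
   summing along antidiagonals, the coefficient of [u^N] is
   [sum_n (-1)^(N-n) (r n + c)^N / (n! (N-n)!)], the [N]-th finite difference of a
   polynomial of degree [N] with leading coefficient [r^N], divided by [N!]: it is
   [r^N], and the series sums to [y^c / (1 - r u)] (an instance of Lagrange
   inversion).  On the other side, the poles [rho J^i] of the [xi_i], with
   [rho = r^(-1/r)], are the [r]-th roots of [1/r], so each [1 / (rho J^i - y)]
   equals a polynomial of degree [r - 1] in [y] divided by [1 - r y^r]; the discrete
   Fourier sum defining [xi_tilde_a] keeps only the monomial [y^c]. *)

From Stdlib Require Import Reals Arith Lia Lra.
From Coquelicot Require Import Coquelicot.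
Open Scope R_scope.

(* Rewriting with Coquelicot's [sum_n] lemmas leaves goals stated in
   [AbelianMonoid.sort _] and using its [plus] and [zero]; [ring] only recognises them
   once they are converted back to [C] or [R]. *)
Ltac sum_ring :=
  match goal with |- ?a = ?b =>
    first [ change (@eq C a b); try change (@plus C_AbelianMonoid) with Cplus;
            try change (@zero C_AbelianMonoid) with (RtoC 0)
          | change (@eq R a b); try change (@plus R_AbelianMonoid) with Rplus ]
  end; ring.

Lemma Cmult_reg_l (k x y : C) : k <> RtoC 0 -> (k * x)%C = (k * y)%C -> x = y.
Proof.
  intros Hk H. replace x with (/ k * (k * x))%C by (field; auto).
  rewrite H. field; auto.
Qed.

Section FiniteSums.

Lemma sum_n_CS (f : nat -> C) N : sum_n f (S N) = (sum_n f N + f (S N))%C.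
Proof. exact (sum_Sn f N). Qed.

Lemma sum_n_Cplus (f g : nat -> C) N :
  sum_n (fun n => f n + g n)%C N = (sum_n f N + sum_n g N)%C.
Proof. exact (sum_n_plus f g N). Qed.

Lemma sum_n_Cmult_l (c : C) (f : nat -> C) N :
  sum_n (fun n => c * f n)%C N = (c * sum_n f N)%C.
Proof. exact (sum_n_mult_l c f N). Qed.

Lemma sum_n_Rplus (f g : nat -> R) N :
  sum_n (fun n => f n + g n) N = sum_n f N + sum_n g N.
Proof. exact (sum_n_plus f g N). Qed.

Lemma sum_n_Rmult_l (c : R) (f : nat -> R) N :
  sum_n (fun n => c * f n) N = c * sum_n f N.
Proof. exact (sum_n_mult_l c f N). Qed.

Lemma sum_n_Cminus (f g : nat -> C) N :
  (sum_n f N - sum_n g N)%C = sum_n (fun n => f n - g n)%C N.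
Proof.
  induction N as [|N IH]; [now rewrite !sum_O|].
  rewrite !sum_n_CS, <- IH. sum_ring.
Qed.

Lemma sum_n_RtoC (f : nat -> R) N : sum_n (fun n => RtoC (f n)) N = RtoC (sum_n f N).
Proof.
  induction N as [|N IH]; [now rewrite !sum_O|].
  rewrite !sum_Sn, IH. symmetry. apply RtoC_plus.
Qed.

Lemma Cmod_sum_n_le (f : nat -> C) N :
  Cmod (sum_n f N) <= sum_n (fun n => Cmod (f n)) N.
Proof.
  induction N as [|N IH]; [rewrite !sum_O; lra|].
  rewrite !sum_Sn. eapply Rle_trans; [apply Cmod_triangle|].
  change (Cmod (sum_n f N) + Cmod (f (S N)) <=
          sum_n (fun n => Cmod (f n)) N + Cmod (f (S N))). lra.
Qed.

Lemma sum_n_le (f g : nat -> R) N : (forall n, (n <= N)%nat -> f n <= g n) ->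
  sum_n f N <= sum_n g N.
Proof.
  induction N as [|N IH]; intros Hfg; [rewrite !sum_O; auto|].
  rewrite !sum_Sn. apply Rplus_le_compat; auto.
Qed.

Lemma sum_n_shift {G : AbelianMonoid} (f : nat -> G) N :
  sum_n f (S N) = plus (f O) (sum_n (fun n => f (S n)) N).
Proof.
  induction N as [|N IH]; [now rewrite sum_Sn, !sum_O|].
  rewrite sum_Sn, IH, sum_Sn. symmetry. apply plus_assoc.
Qed.

Lemma sum_n_single {G : AbelianMonoid} (f : nat -> G) N k : (k <= N)%nat ->
  (forall n, (n <= N)%nat -> n <> k -> f n = zero) -> sum_n f N = f k.
Proof.
  induction N as [|N IH]; intros Hk Hf.
  - rewrite sum_O. f_equal. lia.
  - rewrite sum_Sn. destruct (Nat.eq_dec k (S N)) as [->|Hne].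
    + rewrite (sum_n_ext_loc _ (fun _ => zero)); unfold sum_n; rewrite ?sum_n_m_const_zero.
      * apply plus_zero_l.
      * intros n Hn. apply Hf; lia.
    + rewrite IH, (Hf (S N)); try lia.
      * apply plus_zero_r.
      * intros n Hn. apply Hf; lia.
Qed.

Lemma sum_n_antidiagonal {G : AbelianMonoid} (f : nat -> nat -> G) M :
  sum_n (fun N => sum_n (fun n => f n (N - n)%nat) N) M =
  sum_n (fun n => sum_n (f n) (M - n)) M.
Proof.
  induction M as [|M IH]; [now rewrite !sum_O|].
  rewrite sum_Sn, IH, sum_Sn, (sum_Sn (fun n => sum_n (f n) (S M - n))).
  rewrite (sum_n_ext_loc (fun n => sum_n (f n) (S M - n))
             (fun n => plus (sum_n (f n) (M - n)) (f n (S M - n)%nat))).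
  - rewrite sum_n_plus, Nat.sub_diag, sum_O. apply plus_assoc.
  - intros n Hn. replace (S M - n)%nat with (S (M - n)) by lia. apply sum_Sn.
Qed.

End FiniteSums.

Section Convergence.

Lemma is_series_C_Cmod (a : nat -> C) (l : C) :
  is_series a l <-> forall eps, 0 < eps -> exists N, forall n, (N <= n)%nat ->
     Cmod (sum_n a n - l)%C < eps.
Proof.
  unfold is_series.
  rewrite (@filterlim_locally_ball_norm C_AbsRing nat C_NormedModule eventually _).
  split.
  - intros H eps Heps. exact (H (mkposreal eps Heps)).
  - intros H eps. exact (H eps (cond_pos eps)).
Qed.

Lemma is_series_pair (f g : nat -> R) lf lg : is_series f lf -> is_series g lg ->
  is_series (fun n => (f n, g n) : C) (lf, lg).
Proof.
  intros Hf Hg P [eps HP].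
  assert (Hsum : forall N, sum_n (fun n => (f n, g n) : C) N = (sum_n f N, sum_n g N)).
  { induction N as [|N IH]; [now rewrite !sum_O|]. now rewrite sum_n_CS, !sum_Sn, IH. }
  destruct (Hf _ (locally_ball lf eps)) as [Nf HNf].
  destruct (Hg _ (locally_ball lg eps)) as [Ng HNg].
  exists (Nf + Ng)%nat. intros n Hn. rewrite Hsum. apply HP.
  split; [apply HNf | apply HNg]; lia.
Qed.

Lemma Cmod_sum_n_sub_le_geom (g : nat -> C) (c q : R) K j : 0 <= c -> 0 <= q < 1 ->
  (forall k, Cmod (g k) <= c * q ^ k) ->
  Cmod (sum_n g (K + j) - sum_n g K)%C <= c * q ^ S K * (1 - q ^ j) / (1 - q).
Proof.
  intros Hc Hq Hg. induction j as [|j IH].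
  - rewrite Nat.add_0_r. replace (sum_n g K - sum_n g K)%C with (RtoC 0) by ring.
    rewrite Cmod_0, pow_O. unfold Rdiv. lra.
  - replace (K + S j)%nat with (S (K + j)) by lia. rewrite sum_n_CS.
    replace (sum_n g (K + j) + g (S (K + j)) - sum_n g K)%C with
      ((sum_n g (K + j) - sum_n g K) + g (S (K + j)))%C by ring.
    eapply Rle_trans; [apply Cmod_triangle|].
    specialize (Hg (S (K + j))).
    replace (q ^ S (K + j)) with (q ^ S K * q ^ j) in Hg
      by (rewrite <- pow_add; f_equal; lia).
    replace (c * q ^ S K * (1 - q ^ S j) / (1 - q)) with
      (c * q ^ S K * (1 - q ^ j) / (1 - q) + c * (q ^ S K * q ^ j))
      by (simpl; field; lra).
    lra.
Qed.

Lemma Cmod_series_tail_le (g : nat -> C) (A : C) (c q : R) K : 0 <= c -> 0 <= q < 1 ->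
  (forall k, Cmod (g k) <= c * q ^ k) -> is_series g A ->
  Cmod (A - sum_n g K)%C <= c * q ^ S K / (1 - q).
Proof.
  intros Hc Hq Hg HA. apply le_epsilon. intros eps Heps.
  destruct (proj1 (is_series_C_Cmod g A) HA eps Heps) as [N HN].
  specialize (HN (K + N)%nat ltac:(lia)).
  pose proof (Cmod_sum_n_sub_le_geom g c q K N Hc Hq Hg) as Hpart.
  replace (A - sum_n g K)%C with
    ((sum_n g (K + N) - sum_n g K) - (sum_n g (K + N) - A))%C by ring.
  eapply Rle_trans; [apply Cmod_triangle|]. rewrite Cmod_opp.
  assert (0 <= c * q ^ S K * q ^ N / (1 - q)).
  { assert (0 <= q ^ S K) by (apply pow_le; lra). assert (0 <= q ^ N) by (apply pow_le; lra).
    apply Rdiv_le_0_compat; [|lra]. apply Rmult_le_pos; [apply Rmult_le_pos|]; lra. }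
  replace (c * q ^ S K * (1 - q ^ N) / (1 - q)) with
    (c * q ^ S K / (1 - q) - c * q ^ S K * q ^ N / (1 - q)) in Hpart by (field; lra).
  lra.
Qed.

Lemma INR_le_pow2 n : INR n <= 2 ^ n.
Proof.
  induction n as [|n IH]; [simpl; lra|].
  rewrite S_INR. simpl. assert (1 <= 2 ^ n) by (apply pow_R1_Rle; lra). lra.
Qed.

Lemma INR_mul_pow_vanishes (c q : R) : 0 <= c -> 0 <= q < /2 ->
  forall eps, 0 < eps -> exists N, forall M, (N <= M)%nat ->
   INR (S M) * (c * q ^ S M / (1 - q)) < eps.
Proof.
  intros Hc Hq eps Heps.
  assert (H2q : Rabs (2 * q) < 1) by (rewrite Rabs_right; lra).
  destruct (pow_lt_1_zero (2 * q) H2q (eps / (2 * c + 1))) as [N HN].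
  { apply Rdiv_lt_0_compat; lra. }
  exists N. intros M HM. specialize (HN (S M) ltac:(lia)).
  rewrite Rabs_right, Rpow_mult_distr in HN by (apply Rle_ge, pow_le; lra).
  assert (Hq1 : / (1 - q) <= 2).
  { replace 2 with (/ / 2) by field. apply Rinv_le_contravar; lra. }
  assert (HqM : 0 <= q ^ S M) by (apply pow_le; lra).
  assert (HnM : INR (S M) * q ^ S M <= 2 ^ S M * q ^ S M)
    by (apply Rmult_le_compat_r; [lra | apply INR_le_pow2]).
  assert (Hprod : 0 <= INR (S M) * q ^ S M) by (apply Rmult_le_pos; [apply pos_INR | lra]).
  replace (INR (S M) * (c * q ^ S M / (1 - q)))
    with (c * / (1 - q) * (INR (S M) * q ^ S M)) by (field; lra).
  apply Rle_lt_trans with (2 * c * (eps / (2 * c + 1))).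
  - apply Rmult_le_compat; try nra. apply Rmult_le_pos; [lra|apply Rlt_le, Rinv_0_lt_compat; lra].
  - apply Rmult_lt_reg_r with (2 * c + 1); [lra|].
    replace (2 * c * (eps / (2 * c + 1)) * (2 * c + 1)) with (2 * c * eps) by (field; lra).
    nra.
Qed.

Section Antidiagonal.

Variables (b : nat -> nat -> C) (A : nat -> C) (c q : R).
Hypotheses (Hc : 0 <= c) (Hq : 0 <= q < /2).
Hypothesis Hb : forall n k, Cmod (b n k) <= c * q ^ (n + k).
Hypothesis HA : forall n, is_series (b n) (A n).

Let D N := sum_n (fun n => b n (N - n)%nat) N.

Lemma Cmod_rows_sub_antidiagonals_le M :
  Cmod (sum_n A M - sum_n D M)%C <= INR (S M) * (c * q ^ S M / (1 - q)).
Proof.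
  unfold D. rewrite sum_n_antidiagonal, sum_n_Cminus.
  eapply Rle_trans; [apply Cmod_sum_n_le|].
  rewrite <- sum_n_const. apply sum_n_le. intros n Hn.
  replace (c * q ^ S M) with (c * q ^ n * q ^ S (M - n))
    by (rewrite Rmult_assoc, <- pow_add; do 2 f_equal; lia).
  apply Cmod_series_tail_le; auto; [apply Rmult_le_pos; [lra|apply pow_le; lra] | lra |].
  intros k. rewrite Rmult_assoc, <- pow_add. apply Hb.
Qed.

Lemma is_series_rows_iff_antidiagonals L : is_series A L <-> is_series D L.
Proof.
  pose proof (INR_mul_pow_vanishes c q Hc Hq) as Hsmall.
  rewrite !is_series_C_Cmod.
  split; intros H eps Heps;
    destruct (H (eps / 2) ltac:(lra)) as [N1 H1];
    destruct (Hsmall (eps / 2) ltac:(lra)) as [N2 H2];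
    exists (N1 + N2)%nat; intros M HM;
    specialize (H1 M ltac:(lia)); specialize (H2 M ltac:(lia));
    pose proof (Cmod_rows_sub_antidiagonals_le M) as Hdiff.
  - replace (sum_n D M - L)%C with ((sum_n A M - L) - (sum_n A M - sum_n D M))%C by ring.
    eapply Rle_lt_trans; [apply Cmod_triangle|]. rewrite Cmod_opp. lra.
  - replace (sum_n A M - L)%C with ((sum_n D M - L) + (sum_n A M - sum_n D M))%C by ring.
    eapply Rle_lt_trans; [apply Cmod_triangle|]. lra.
Qed.

End Antidiagonal.

End Convergence.

Section Geometric.

Lemma Cgeom_partial_sum (z : C) M :
  ((RtoC 1 - z) * sum_n (fun N => z ^ N) M)%C = (RtoC 1 - z ^ S M)%C.
Proof.
  induction M as [|M IH]; [rewrite sum_O; simpl; ring|].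
  rewrite sum_n_CS, Cmult_plus_distr_l, IH. simpl. ring.
Qed.

Lemma is_series_Cgeom (z : C) : Cmod z < 1 -> is_series (fun N => z ^ N)%C (/ (RtoC 1 - z))%C.
Proof.
  intros Hz.
  assert (H1z : (RtoC 1 - z)%C <> RtoC 0).
  { intro E. replace z with (RtoC 1) in Hz
      by (replace z with (RtoC 1 - (RtoC 1 - z))%C by ring; rewrite E; ring).
    rewrite Cmod_1 in Hz. lra. }
  assert (Hm : 0 < Cmod (RtoC 1 - z)%C) by now apply Cmod_gt_0.
  apply is_series_C_Cmod. intros eps Heps.
  assert (Hz' : Rabs (Cmod z) < 1) by (rewrite Rabs_right; [lra | apply Rle_ge, Cmod_ge_0]).
  destruct (pow_lt_1_zero _ Hz' (eps * Cmod (RtoC 1 - z)%C)) as [N HN].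
  { now apply Rmult_lt_0_compat. }
  exists N. intros n Hn. specialize (HN (S n) ltac:(lia)).
  rewrite Rabs_right in HN by (apply Rle_ge, pow_le, Cmod_ge_0).
  replace (sum_n (fun N => z ^ N) n - / (RtoC 1 - z))%C with (- z ^ S n / (RtoC 1 - z))%C.
  - unfold Cdiv. rewrite Cmod_mult, Cmod_opp, Cmod_inv, Cmod_pow by auto.
    apply (Rmult_lt_reg_r (Cmod (RtoC 1 - z)%C)); [auto|].
    rewrite Rmult_assoc, Rinv_l by lra. lra.
  - apply (Cmult_reg_l (RtoC 1 - z)%C); [auto|].
    replace ((RtoC 1 - z) * (sum_n (fun N => z ^ N) n - / (RtoC 1 - z)))%C with
      ((RtoC 1 - z) * sum_n (fun N => z ^ N) n - RtoC 1)%C by (field; auto).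
    rewrite Cgeom_partial_sum. field. auto.
Qed.

End Geometric.

Section Exponential.

Definition exp_term (z : C) (n : nat) : C := (RtoC (/ INR (fact n)) * z ^ n)%C.

Lemma exp_term_0 z : exp_term z 0 = RtoC 1.
Proof. unfold exp_term. simpl. rewrite Rinv_1. ring. Qed.

Lemma exp_term_S z n : (RtoC (INR (S n)) * exp_term z (S n))%C = (z * exp_term z n)%C.
Proof.
  unfold exp_term. rewrite Cpow_S, Cmult_assoc, <- RtoC_mult.
  replace (INR (S n) * / INR (fact (S n))) with (/ INR (fact n)).
  - ring.
  - rewrite fact_simpl, mult_INR. field. split; [apply INR_fact_neq_0 | apply not_0_INR; lia].
Qed.

(* The binomial theorem, via the recurrence [(N+1) t_(N+1) = (u + v) t_N] satisfied
   by both sides. *)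
Lemma sum_n_exp_term_antidiagonal u v N :
  sum_n (fun n => exp_term u n * exp_term v (N - n))%C N = exp_term (u + v) N.
Proof.
  induction N as [|N IH].
  - rewrite sum_O, Nat.sub_0_r, !exp_term_0. sum_ring.
  - apply (Cmult_reg_l (RtoC (INR (S N)))).
    { intro E. apply RtoC_inj in E. now apply (not_0_INR (S N)). }
    rewrite exp_term_S, <- IH, <- sum_n_Cmult_l.
    rewrite (sum_n_ext_loc _ (fun n => RtoC (INR n) * (exp_term u n * exp_term v (S N - n))
        + RtoC (INR (S N - n)) * (exp_term u n * exp_term v (S N - n)))%C).
    2:{ intros n Hn. rewrite <- Cmult_plus_distr_r, <- RtoC_plus, <- plus_INR.
        do 3 f_equal. lia. }
    rewrite sum_n_Cplus, sum_n_shift, sum_n_CS, Nat.sub_diag.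
    rewrite (sum_n_ext_loc
               (fun n => RtoC (INR (S n)) * (exp_term u (S n) * exp_term v (S N - S n)))%C
        (fun n => u * (exp_term u n * exp_term v (N - n)))%C).
    2:{ intros n Hn. replace (S N - S n)%nat with (N - n)%nat by lia.
        rewrite Cmult_assoc, exp_term_S. sum_ring. }
    rewrite (sum_n_ext_loc
               (fun n => RtoC (INR (S N - n)) * (exp_term u n * exp_term v (S N - n)))%C
        (fun n => v * (exp_term u n * exp_term v (N - n)))%C).
    2:{ intros n Hn. replace (S N - n)%nat with (S (N - n)) by lia.
        rewrite Cmult_comm, <- Cmult_assoc, (Cmult_comm _ (RtoC _)), exp_term_S. sum_ring. }
    rewrite !sum_n_Cmult_l. simpl (INR 0). sum_ring.
Qed.

Lemma pow_div_fact_le_exp x n : 0 <= x -> x ^ n / INR (fact n) <= exp x.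
Proof.
  intros Hx. eapply Rle_trans; [|apply (exp_ge_taylor x n Hx)].
  destruct n as [|n]; [simpl; lra|].
  rewrite tech5.
  assert (0 <= sum_f_R0 (fun k => x ^ k / INR (fact k)) n).
  { apply cond_pos_sum. intros k.
    apply Rdiv_le_0_compat; [apply pow_le; lra | apply INR_fact_lt_0]. }
  lra.
Qed.

Lemma Cmod_exp_term_le z n : Cmod (exp_term z n) <= exp (4 * Cmod z) * (/ 4) ^ n.
Proof.
  unfold exp_term. rewrite Cmod_mult, Cmod_R, Cmod_pow, Rabs_right
    by (apply Rle_ge, Rlt_le, Rinv_0_lt_compat, INR_fact_lt_0).
  replace (Cmod z ^ n) with ((4 * Cmod z) ^ n * (/ 4) ^ n)
    by (rewrite <- Rpow_mult_distr; f_equal; field).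
  rewrite <- Rmult_assoc. apply Rmult_le_compat_r; [apply pow_le; lra|].
  rewrite Rmult_comm. apply pow_div_fact_le_exp. pose proof (Cmod_ge_0 z). lra.
Qed.

Lemma is_series_R0 : is_series (fun _ : nat => 0) 0.
Proof.
  eapply filterlim_ext; [|apply filterlim_const].
  intros N. simpl. rewrite sum_n_const. ring.
Qed.

Lemma is_series_exp_term_real a : is_series (exp_term (RtoC a)) (RtoC (exp a)).
Proof.
  pose proof (is_series_pair _ _ _ _ (is_exp_Reals a) is_series_R0) as H.
  eapply is_series_ext; [|exact H]. intros n.
  unfold exp_term. rewrite <- RtoC_pow, <- RtoC_mult.
  change (scal (pow_n a n) (/ INR (fact n))) with (pow_n a n * / INR (fact n)).
  rewrite pow_n_pow, Rmult_comm. reflexivity.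
Qed.

Lemma CI_pow_even k : (CI ^ (2 * k))%C = RtoC ((-1) ^ k).
Proof.
  rewrite Cpow_mult_r, RtoC_pow. f_equal.
  unfold CI, RtoC. simpl. unfold Cmult. simpl. f_equal; ring.
Qed.

Lemma CI_pow_odd k : (CI ^ (2 * k + 1))%C = (0, (-1) ^ k).
Proof.
  rewrite Cpow_add_r, CI_pow_even, Cpow_1_r. unfold CI, RtoC, Cmult. simpl. f_equal; ring.
Qed.

(* [cos b] and [sin b] are the real and imaginary parts of [sum_n (I b)^n / n!]. *)
Lemma is_series_cos b : is_series (fun n => fst (CI ^ n)%C / INR (fact n) * b ^ n) (cos b).
Proof.
  set (a := fun n => fst (CI ^ n)%C / INR (fact n)).
  assert (Heven : is_pseries (fun k => a (2 * k)%nat) (b ^ 2) (cos b)).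
  { apply is_pseries_R. unfold cos. destruct (exist_cos (Rsqr b)) as [l Hl].
    apply is_series_Reals in Hl.
    eapply is_series_ext; [|exact Hl]. intros k.
    unfold a. rewrite CI_pow_even. unfold cos_n, Rsqr. simpl. now rewrite Rmult_1_r. }
  assert (Hodd : is_pseries (fun k => a (2 * k + 1)%nat) (b ^ 2) 0).
  { apply is_pseries_R. eapply is_series_ext; [|apply is_series_R0]. intros k.
    unfold a. rewrite CI_pow_odd. simpl. unfold Rdiv. ring. }
  pose proof (is_pseries_odd_even _ _ _ _ Heven Hodd) as H.
  rewrite Rmult_0_r, Rplus_0_r in H. now apply is_pseries_R in H.
Qed.

Lemma is_series_sin b : is_series (fun n => snd (CI ^ n)%C / INR (fact n) * b ^ n) (sin b).
Proof.
  set (a := fun n => snd (CI ^ n)%C / INR (fact n)).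
  unfold sin. destruct (exist_sin (Rsqr b)) as [l Hl].
  assert (Hodd : is_pseries (fun k => a (2 * k + 1)%nat) (b ^ 2) l).
  { apply is_pseries_R. apply is_series_Reals in Hl.
    eapply is_series_ext; [|exact Hl]. intros k.
    unfold a. rewrite CI_pow_odd. unfold sin_n, Rsqr. simpl. rewrite Rmult_1_r. unfold Rdiv. ring. }
  assert (Heven : is_pseries (fun k => a (2 * k)%nat) (b ^ 2) 0).
  { apply is_pseries_R. eapply is_series_ext; [|apply is_series_R0]. intros k.
    unfold a. rewrite CI_pow_even. simpl. unfold Rdiv. ring. }
  pose proof (is_pseries_odd_even _ _ _ _ Heven Hodd) as H.
  rewrite Rplus_0_l in H. now apply is_pseries_R in H.
Qed.

Lemma is_series_exp_term_imag b : is_series (exp_term (CI * RtoC b)) (cos b, sin b).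
Proof.
  pose proof (is_series_pair _ _ _ _ (is_series_cos b) (is_series_sin b)) as H.
  eapply is_series_ext; [|exact H]. intros n.
  unfold exp_term. rewrite Cpow_mult_l, <- RtoC_pow.
  destruct (CI ^ n)%C as [p q]. unfold RtoC, Cmult. simpl. f_equal; unfold Rdiv; ring.
Qed.

(* The exponential series of [a + I b] is the Cauchy product of those of [a] and [I b]. *)
Lemma is_series_Cexp z : is_series (exp_term z) (Cexp z).
Proof.
  destruct z as [a b].
  set (ca := exp (4 * Cmod (RtoC a))). set (cb := exp (4 * Cmod (CI * RtoC b))).
  assert (Hb : forall n k, Cmod (exp_term (RtoC a) n * exp_term (CI * RtoC b) k)%C
                           <= ca * cb * (/ 4) ^ (n + k)).
  { intros n k. rewrite Cmod_mult, pow_add.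
    pose proof (Cmod_exp_term_le (RtoC a) n). pose proof (Cmod_exp_term_le (CI * RtoC b) k).
    pose proof (Cmod_ge_0 (exp_term (RtoC a) n)).
    pose proof (Cmod_ge_0 (exp_term (CI * RtoC b) k)).
    replace (ca * cb * ((/ 4) ^ n * (/ 4) ^ k)) with (ca * (/ 4) ^ n * (cb * (/ 4) ^ k)) by ring.
    apply Rmult_le_compat; auto. }
  assert (Hrows : forall n, is_series (fun k => exp_term (RtoC a) n * exp_term (CI * RtoC b) k)%C
                                      (exp_term (RtoC a) n * (cos b, sin b))%C).
  { intros n. exact (is_series_scal _ _ _ (is_series_exp_term_imag b)). }
  assert (Hca : 0 <= ca * cb) by (apply Rmult_le_pos; apply Rlt_le, exp_pos).
  assert (Hsum : is_series (fun n => exp_term (RtoC a) n * (cos b, sin b))%C (Cexp (a, b))).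
  { replace (Cexp (a, b)) with ((cos b, sin b) * RtoC (exp a))%C.
    - eapply is_series_ext; [intros n; apply Cmult_comm|].
      exact (is_series_scal _ _ _ (is_series_exp_term_real a)).
    - unfold Cexp, RtoC, Cmult. simpl. f_equal; ring. }
  apply (is_series_rows_iff_antidiagonals _ _ _ (/ 4) Hca ltac:(lra) Hb Hrows) in Hsum.
  eapply is_series_ext; [|exact Hsum]. intros N. simpl.
  rewrite sum_n_exp_term_antidiagonal. f_equal.
  unfold CI, RtoC, Cmult, Cplus. simpl. f_equal; ring.
Qed.

Lemma Cexp_add z w : Cexp (z + w)%C = (Cexp z * Cexp w)%C.
Proof.
  destruct z as [a b], w as [c d]. unfold Cexp. simpl.
  rewrite exp_plus, cos_plus, sin_plus. unfold Cmult. simpl. f_equal; ring.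
Qed.

Lemma Cexp_natmul k z : Cexp (RtoC (INR k) * z)%C = (Cexp z ^ k)%C.
Proof.
  induction k as [|k IH].
  - unfold Cexp. simpl. rewrite !Rmult_0_l, Rminus_0_r, Rplus_0_l, exp_0, cos_0, sin_0.
    unfold RtoC. f_equal; ring.
  - rewrite S_INR, RtoC_plus, Cmult_plus_distr_r, Cmult_1_l, Cplus_comm, Cexp_add, IH.
    apply Cpow_S.
Qed.

End Exponential.

Section FiniteDifferences.

Definition fdiff (f : nat -> R) (n : nat) : R := f (S n) - f n.

Definition alt_fact_weight (N n : nat) : R :=
  (-1) ^ (N - n) / (INR (fact n) * INR (fact (N - n))).

(* [alt_fact_sum N f = (fdiff^N f) 0 / N!]. *)
Definition alt_fact_sum (N : nat) (f : nat -> R) : R :=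
  sum_n (fun n => alt_fact_weight N n * f n) N.

Lemma alt_fact_weight_S_l N n : INR (S n) * alt_fact_weight (S N) (S n) = alt_fact_weight N n.
Proof.
  unfold alt_fact_weight. replace (S N - S n)%nat with (N - n)%nat by lia.
  rewrite fact_simpl, mult_INR.
  pose proof (INR_fact_lt_0 n). pose proof (INR_fact_lt_0 (N - n)).
  assert (0 < INR (S n)) by (apply lt_0_INR; lia). field. lra.
Qed.

Lemma alt_fact_weight_S_r N n : (n <= N)%nat ->
  INR (S N - n) * alt_fact_weight (S N) n = - alt_fact_weight N n.
Proof.
  intros Hn. unfold alt_fact_weight. replace (S N - n)%nat with (S (N - n)) by lia.
  rewrite fact_simpl, mult_INR.
  pose proof (INR_fact_lt_0 n). pose proof (INR_fact_lt_0 (N - n)).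
  assert (0 < INR (S (N - n))) by (apply lt_0_INR; lia). simpl pow. field. lra.
Qed.

Lemma alt_fact_sum_S N f : INR (S N) * alt_fact_sum (S N) f = alt_fact_sum N (fdiff f).
Proof.
  unfold alt_fact_sum. rewrite <- sum_n_Rmult_l.
  rewrite (sum_n_ext_loc _ (fun n => INR n * alt_fact_weight (S N) n * f n
                                   + INR (S N - n) * alt_fact_weight (S N) n * f n)).
  2:{ intros n Hn. rewrite <- !Rmult_plus_distr_r, <- plus_INR.
      replace (n + (S N - n))%nat with (S N) by lia. sum_ring. }
  rewrite sum_n_Rplus, sum_n_shift, sum_Sn, Nat.sub_diag.
  rewrite (sum_n_ext_loc (fun n => INR (S n) * alt_fact_weight (S N) (S n) * f (S n))
                         (fun n => alt_fact_weight N n * f (S n))).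
  2:{ intros n Hn. now rewrite alt_fact_weight_S_l. }
  rewrite (sum_n_ext_loc (fun n => INR (S N - n) * alt_fact_weight (S N) n * f n)
                         (fun n => - (alt_fact_weight N n * f n))).
  2:{ intros n Hn. rewrite alt_fact_weight_S_r by lia. sum_ring. }
  replace (sum_n (fun n => alt_fact_weight N n * fdiff f n) N) with
    (sum_n (fun n => alt_fact_weight N n * f (S n) + - (alt_fact_weight N n * f n)) N).
  - rewrite sum_n_Rplus. simpl (INR 0). sum_ring.
  - apply sum_n_ext. intros n. unfold fdiff. sum_ring.
Qed.

(* [lead_coeff d f L]: [f] is a polynomial in [n] of degree at most [d] whose
   coefficient of [n ^ d] is [L]; it is recorded as [fdiff^d f = d! * L]. *)
Fixpoint lead_coeff (d : nat) (f : nat -> R) (L : R) : Prop :=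
  match d with
  | O => forall n, f n = L
  | S d' => lead_coeff d' (fdiff f) (INR d * L)
  end.

Lemma lead_coeff_ext d : forall f g L M, lead_coeff d f L ->
  (forall n, f n = g n) -> L = M -> lead_coeff d g M.
Proof.
  induction d as [|d IH]; intros f g L M Hf Hfg <-; simpl in *.
  - intros n. now rewrite <- Hfg.
  - apply (IH _ _ _ _ Hf); [|reflexivity]. intros n. unfold fdiff. now rewrite !Hfg.
Qed.

Lemma lead_coeff_plus d : forall f g L M, lead_coeff d f L -> lead_coeff d g M ->
  lead_coeff d (fun n => f n + g n) (L + M).
Proof.
  induction d as [|d IH]; intros f g L M Hf Hg; simpl in *.
  - intros n. now rewrite Hf, Hg.
  - eapply lead_coeff_ext; [apply (IH _ _ _ _ Hf Hg)| |]; intros; unfold fdiff; ring.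
Qed.

Lemma lead_coeff_scal d : forall f L k, lead_coeff d f L ->
  lead_coeff d (fun n => k * f n) (k * L).
Proof.
  induction d as [|d IH]; intros f L k Hf; simpl in *.
  - intros n. now rewrite Hf.
  - eapply lead_coeff_ext; [apply (IH _ _ k Hf)| |]; intros; unfold fdiff; ring.
Qed.

Lemma lead_coeff_shift d : forall f L, lead_coeff d f L -> lead_coeff d (fun n => f (S n)) L.
Proof.
  induction d as [|d IH]; intros f L Hf; simpl in *; [intros n; apply Hf | apply (IH _ _ Hf)].
Qed.

Lemma lead_coeff_mul_affine (r c : R) d : forall f L, lead_coeff d f L ->
  lead_coeff (S d) (fun n => (r * INR n + c) * f n) (r * L).
Proof.
  induction d as [|d IH]; intros f L Hf.
  - simpl in *. intros n. unfold fdiff. rewrite !Hf, S_INR. ring.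
  - assert (H1 : lead_coeff (S d) (fun n => (r * INR n + c) * fdiff f n) (r * (INR (S d) * L)))
      by exact (IH _ _ Hf).
    assert (H2 : lead_coeff (S d) (fun n => r * f (S n)) (r * L))
      by (apply lead_coeff_scal, lead_coeff_shift, Hf).
    change (lead_coeff (S d) (fdiff (fun n => (r * INR n + c) * f n)) (INR (S (S d)) * (r * L))).
    eapply lead_coeff_ext; [apply (lead_coeff_plus _ _ _ _ _ H1 H2)| |].
    + intros n. unfold fdiff. rewrite S_INR. ring.
    + rewrite (S_INR (S d)). ring.
Qed.

Lemma lead_coeff_affine_pow (r c : R) d : lead_coeff d (fun n => (r * INR n + c) ^ d) (r ^ d).
Proof.
  induction d as [|d IH]; [intros n; reflexivity|].
  exact (lead_coeff_mul_affine r c d _ _ IH).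
Qed.

Lemma alt_fact_sum_lead_coeff N : forall f L, lead_coeff N f L -> alt_fact_sum N f = L.
Proof.
  induction N as [|N IH]; intros f L Hf.
  - simpl in Hf. unfold alt_fact_sum, alt_fact_weight. rewrite sum_O, Hf. simpl. field.
  - apply (Rmult_eq_reg_l (INR (S N))); [|apply not_0_INR; lia].
    rewrite alt_fact_sum_S. exact (IH _ _ Hf).
Qed.

Lemma alt_fact_sum_affine_pow (r c : R) N : alt_fact_sum N (fun n => (r * INR n + c) ^ N) = r ^ N.
Proof. apply alt_fact_sum_lead_coeff, lead_coeff_affine_pow. Qed.

End FiniteDifferences.

Section Lagrange.

Lemma exp_INR_mul n y : exp (INR n * y) = exp y ^ n.
Proof.
  induction n as [|n IH]; [simpl; rewrite Rmult_0_l; apply exp_0|].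
  rewrite S_INR, Rmult_plus_distr_r, Rmult_1_l, exp_plus, IH. simpl. ring.
Qed.

Lemma exp_term_mul_exp_term_opp (m : R) (u : C) N n : (n <= N)%nat ->
  (exp_term (RtoC m * u) n * exp_term (RtoC (- m) * u) (N - n))%C =
  (RtoC (alt_fact_weight N n * m ^ N) * u ^ N)%C.
Proof.
  intros Hn. unfold exp_term, alt_fact_weight. rewrite !Cpow_mult_l, <- !RtoC_pow.
  replace (u ^ N)%C with (u ^ n * u ^ (N - n))%C by (rewrite <- Cpow_add_r; f_equal; lia).
  transitivity (RtoC (/ INR (fact n) * m ^ n * / INR (fact (N - n)) * (- m) ^ (N - n))
                * (u ^ n * u ^ (N - n)))%C; [rewrite !RtoC_mult; ring|].
  do 2 f_equal.
  replace (- m) with (-1 * m) by ring. rewrite Rpow_mult_distr.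
  replace (m ^ N) with (m ^ n * m ^ (N - n)) by (rewrite <- pow_add; f_equal; lia).
  field. split; apply INR_fact_neq_0.
Qed.

Variables (r c : R) (u : C).
Hypotheses (Hr : 0 <= r) (Hc : 0 <= c) (Hu : 16 * r * Cmod u <= 1).

Let m (n : nat) : R := r * INR n + c.
Let q : R := exp (8 * r * Cmod u) / 4.

Lemma lagrange_ratio_bounds : / 4 <= q < / 2.
Proof.
  pose proof (Cmod_ge_0 u).
  assert (Hq : exp (8 * r * Cmod u) <= exp (/ 2)).
  { destruct (Rle_lt_or_eq_dec (8 * r * Cmod u) (/ 2)) as [Hlt|Heq]; [nra| |].
    - now apply Rlt_le, exp_increasing.
    - rewrite Heq. lra. }
  assert (H1 : 1 <= exp (8 * r * Cmod u)) by (pose proof (exp_ineq1_le (8 * r * Cmod u)); nra).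
  assert (Hhalf : exp (/ 2) < 2).
  { assert (exp (/ 2) * exp (/ 2) = exp 1) by (rewrite <- exp_plus; f_equal; field).
    pose proof exp_le_3. pose proof (exp_pos (/ 2)). nra. }
  unfold q. lra.
Qed.

Lemma Cmod_lagrange_term_le n k :
  Cmod (exp_term (RtoC (m n) * u) n * exp_term (RtoC (- m n) * u) k)%C
  <= exp (8 * c * Cmod u) * q ^ (n + k).
Proof.
  assert (Hm : 0 <= m n) by (unfold m; pose proof (pos_INR n); nra).
  pose proof (Cmod_exp_term_le (RtoC (m n) * u) n) as Bn.
  pose proof (Cmod_exp_term_le (RtoC (- m n) * u) k) as Bk.
  rewrite Cmod_mult, Cmod_R, Rabs_right in Bn by lra.
  rewrite Cmod_mult, Cmod_R, Rabs_Ropp, Rabs_right in Bk by lra.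
  rewrite Cmod_mult.
  eapply Rle_trans; [apply Rmult_le_compat; eauto using Cmod_ge_0|].
  replace (exp (4 * (m n * Cmod u)) * (/ 4) ^ n * (exp (4 * (m n * Cmod u)) * (/ 4) ^ k))
    with (exp (8 * c * Cmod u) * ((exp (8 * r * Cmod u) / 4) ^ n * (/ 4) ^ k)).
  - rewrite pow_add. apply Rmult_le_compat_l; [apply Rlt_le, exp_pos|].
    pose proof lagrange_ratio_bounds.
    apply Rmult_le_compat_l; [apply pow_le; lra|]. apply pow_incr. lra.
  - assert (E : exp (4 * (m n * Cmod u)) * exp (4 * (m n * Cmod u))
                 = exp (8 * c * Cmod u) * exp (8 * r * Cmod u) ^ n).
    { rewrite <- exp_plus, <- exp_INR_mul, <- exp_plus. unfold m. f_equal. ring. }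
    unfold Rdiv. rewrite Rpow_mult_distr.
    transitivity (exp (8 * c * Cmod u) * exp (8 * r * Cmod u) ^ n * ((/ 4) ^ n * (/ 4) ^ k));
      [ring | rewrite <- E; ring].
Qed.

(* Lagrange's identity [sum_n (m_n u)^n / n! * e^(-m_n u) = 1 / (1 - r u)] for an
   arithmetic progression [m_n = r n + c]: expanding [e^(-m_n u)] and summing
   along antidiagonals, the coefficient of [u^N] is [alt_fact_sum N (m^N) = r^N]. *)
Lemma is_series_lagrange :
  is_series (fun n => exp_term (RtoC (m n) * u) n * Cexp (RtoC (- m n) * u))%C
    (/ (RtoC 1 - RtoC r * u))%C.
Proof.
  pose proof lagrange_ratio_bounds as Hq.
  assert (Hrows : forall n, is_series (fun k => exp_term (RtoC (m n) * u) n
                                                * exp_term (RtoC (- m n) * u) k)%C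
                                      (exp_term (RtoC (m n) * u) n * Cexp (RtoC (- m n) * u))%C)
    by (intros n; exact (is_series_scal _ _ _ (is_series_Cexp _))).
  apply (is_series_rows_iff_antidiagonals _ _ (exp (8 * c * Cmod u)) q
           ltac:(apply Rlt_le, exp_pos) ltac:(lra) Cmod_lagrange_term_le Hrows).
  assert (Hru : Cmod (RtoC r * u)%C < 1).
  { rewrite Cmod_mult, Cmod_R, Rabs_right by lra. pose proof (Cmod_ge_0 u). nra. }
  eapply is_series_ext; [|exact (is_series_Cgeom _ Hru)]. intros N. simpl.
  rewrite (sum_n_ext_loc _ (fun n => u ^ N * RtoC (alt_fact_weight N n * (r * INR n + c) ^ N))%C).
  2:{ intros n Hn. rewrite exp_term_mul_exp_term_opp by auto. apply Cmult_comm. }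
  rewrite sum_n_Cmult_l, sum_n_RtoC.
  change (sum_n (fun n => alt_fact_weight N n * (r * INR n + c) ^ N) N)
    with (alt_fact_sum N (fun n => (r * INR n + c) ^ N)).
  rewrite alt_fact_sum_affine_pow, Cpow_mult_l, RtoC_pow. apply Cmult_comm.
Qed.

End Lagrange.

Section RootsOfUnity.

Lemma J_pow r k : (J r ^ k)%C = (cos (INR k * (2 * PI / INR r)), sin (INR k * (2 * PI / INR r))).
Proof.
  induction k as [|k IH]; [simpl; rewrite Rmult_0_l, cos_0, sin_0; reflexivity|].
  rewrite Cpow_S, IH, S_INR. unfold J, Cmult. simpl.
  rewrite Rmult_plus_distr_r, Rmult_1_l, Rplus_comm, cos_plus, sin_plus. f_equal; ring.
Qed.

Lemma J_neq_0 r : J r <> RtoC 0.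
Proof.
  intros E. unfold J, RtoC in E. injection E as E1 E2.
  now apply (cos_sin_0 (2 * PI / INR r)).
Qed.

Lemma Cmod_J r : Cmod (J r) = 1.
Proof.
  unfold Cmod, J. simpl. rewrite !Rmult_1_r.
  rewrite <- (sqrt_1). f_equal. pose proof (sin2_cos2 (2 * PI / INR r)). unfold Rsqr in *. lra.
Qed.

Lemma J_pow_r r : (1 <= r)%nat -> (J r ^ r)%C = RtoC 1.
Proof.
  intros Hr. rewrite J_pow.
  replace (INR r * (2 * PI / INR r)) with (2 * PI) by (field; apply not_0_INR; lia).
  now rewrite cos_2PI, sin_2PI.
Qed.

Lemma J_pow_neq_1 r k : (0 < k < r)%nat -> (J r ^ k)%C <> RtoC 1.
Proof.
  intros Hk E. rewrite J_pow in E. unfold RtoC in E. injection E as E1 E2.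
  assert (Hr : 0 < INR r) by (apply lt_0_INR; lia).
  assert (Hkr : INR k < INR r) by (apply lt_INR; lia).
  assert (Hk0 : 0 < INR k) by (apply lt_0_INR; lia).
  pose proof PI_RGT_0.
  set (t := INR k * (2 * PI / INR r)) in *.
  assert (Ht : 0 < t < 2 * PI).
  { replace t with (2 * PI * (INR k / INR r)) by (unfold t; field; lra).
    assert (0 < INR k / INR r < 1).
    { split; [now apply Rdiv_lt_0_compat|]. apply (Rmult_lt_reg_r (INR r)); [auto|].
      field_simplify; lra. }
    nra. }
  destruct (sin_eq_O_2PI_0 t ltac:(lra) ltac:(lra) E2) as [-> | [-> | ->]]; try lra.
  rewrite cos_PI in E1. lra.
Qed.

Lemma Cinv_J_pow_neq_1 r k : (1 <= r)%nat -> (0 < k < 2 * r)%nat -> k <> r ->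
  ((/ J r) ^ k)%C <> RtoC 1.
Proof.
  intros Hr Hk Hkr E. rewrite Cpow_inv in E by apply J_neq_0.
  assert (E2 : (J r ^ k)%C = RtoC 1).
  { replace (J r ^ k)%C with (/ / J r ^ k)%C by (field; apply Cpow_nz, J_neq_0).
    rewrite E. field. }
  destruct (Nat.lt_ge_cases k r).
  - apply (J_pow_neq_1 r k); [lia | auto].
  - apply (J_pow_neq_1 r (k - r)); [lia|].
    replace k with (r + (k - r))%nat in E2 by lia. rewrite Cpow_add_r, J_pow_r in E2 by auto.
    rewrite <- E2. ring.
Qed.

Lemma Cinv_J_pow_r r : (1 <= r)%nat -> ((/ J r) ^ r)%C = RtoC 1.
Proof.
  intros Hr. rewrite Cpow_inv, J_pow_r by (auto using J_neq_0). field.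
Qed.

Lemma sum_n_root_of_unity (z : C) r : (1 <= r)%nat -> (z ^ r)%C = RtoC 1 ->
  sum_n (fun i => z ^ i)%C (r - 1) = if Ceq_dec z (RtoC 1) then RtoC (INR r) else RtoC 0.
Proof.
  intros Hr Hz. destruct (Ceq_dec z (RtoC 1)) as [->|Hne].
  - rewrite (sum_n_ext _ (fun _ => RtoC 1)) by (intros; apply Cpow_1_l).
    rewrite (sum_n_RtoC (fun _ => 1)), sum_n_const. f_equal.
    replace (S (r - 1)) with r by lia. ring.
  - apply (Cmult_reg_l (RtoC 1 - z)).
    { intros E. apply Hne. replace z with (RtoC 1 - (RtoC 1 - z))%C by ring. rewrite E. ring. }
    rewrite Cgeom_partial_sum. replace (S (r - 1)) with r by lia. rewrite Hz. ring.
Qed.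

End RootsOfUnity.

Section XiTilde.

(* The poles [pole_radius r * J r ^ i] of the [xi r i] are the [r]-th roots of [1 / r]. *)
Definition pole_radius (r : nat) : R := Rpower (INR r) (- / INR r).

Lemma pole_radius_pos r : 0 < pole_radius r.
Proof. apply exp_pos. Qed.

Lemma pole_radius_pow r : (1 <= r)%nat -> pole_radius r ^ r = / INR r.
Proof.
  intros Hr. assert (0 < INR r) by (apply lt_0_INR; lia).
  unfold pole_radius. rewrite <- Rpower_pow by apply exp_pos.
  rewrite Rpower_mult. replace (- / INR r * INR r) with (- (1)) by (field; lra).
  rewrite Rpower_Ropp, Rpower_1 by lra. reflexivity.
Qed.

(* Partial fractions: with [w ^ r = 1] and [rho ^ r = 1 / r], the truncated geometric
   expansion of [1 / (rho / w - y)] is exact up to the common factor [1 - r y^r]. *)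
Lemma Cinv_sub_root_of_unity (w y : C) (rho : R) r : (1 <= r)%nat -> 0 < rho -> w <> RtoC 0 ->
  (w ^ r)%C = RtoC 1 -> rho ^ r = / INR r ->
  (RtoC rho * / w - y)%C <> RtoC 0 -> (RtoC 1 - RtoC (INR r) * y ^ r)%C <> RtoC 0 ->
  (/ (RtoC rho * / w - y))%C =
  (sum_n (fun m => y ^ m * (w * / RtoC rho) ^ S m) (r - 1) / (RtoC 1 - RtoC (INR r) * y ^ r))%C.
Proof.
  intros Hr Hrho Hw Hwr Hrhor Hpole HD.
  assert (HrhoR : rho <> 0) by lra.
  assert (HrR : INR r <> 0) by (apply not_0_INR; lia).
  assert (Hrho0 : RtoC rho <> RtoC 0) by (intro E; now apply RtoC_inj in E).
  assert (Hr0 : RtoC (INR r) <> RtoC 0) by (intro E; now apply RtoC_inj in E).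
  set (v := (w * / RtoC rho)%C).
  set (G := sum_n (fun m => (y * v) ^ m)%C (r - 1) : C).
  assert (Hgeom : ((RtoC 1 - y * v) * G)%C = (RtoC 1 - RtoC (INR r) * y ^ r)%C).
  { unfold G. rewrite Cgeom_partial_sum. replace (S (r - 1)) with r by lia.
    unfold v. rewrite !Cpow_mult_l, Hwr, Cpow_inv, <- RtoC_pow, Hrhor, RtoC_inv by auto.
    field. auto. }
  rewrite (sum_n_ext _ (fun m => v * (y * v) ^ m)%C)
    by (intros m; rewrite Cpow_S, Cpow_mult_l; sum_ring).
  rewrite sum_n_Cmult_l. change (sum_n (Cpow (y * v)) (r - 1)) with G.
  rewrite <- Hgeom. clearbody G.
  assert (HG : G <> RtoC 0) by (intro E; apply HD; rewrite <- Hgeom, E; ring).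
  assert (Hyv : (RtoC 1 - y * v)%C <> RtoC 0) by (intro E; apply HD; rewrite <- Hgeom, E; ring).
  replace (RtoC rho * / w - y)%C with (RtoC rho * / w * (RtoC 1 - y * v))%C
    by (unfold v; field; auto).
  unfold v in *. field. repeat split; auto.
  intro E. apply Hyv.
  replace (RtoC 1 - y * (w * / RtoC rho))%C with ((RtoC rho - y * w) * / RtoC rho)%C
    by (field; auto).
  rewrite E. ring.
Qed.

Lemma Rpower_mul_inv_pole_radius_pow r a : (1 <= r)%nat -> (a < r)%nat ->
  Rpower (INR r) (- / 2 - / INR r) * (/ pole_radius r) ^ (r - a)
  = Rpower (INR r) (/ 2 - INR (a + 1) / INR r).
Proof.
  intros Hr Ha. assert (0 < INR r) by (apply lt_0_INR; lia).
  replace (/ pole_radius r) with (Rpower (INR r) (/ INR r))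
    by (unfold pole_radius; rewrite Rpower_Ropp; symmetry; apply Rinv_inv).
  rewrite <- Rpower_pow, Rpower_mult, <- Rpower_plus by apply exp_pos.
  f_equal. rewrite minus_INR, plus_INR by lia. simpl (INR 1). field. lra.
Qed.

Variables (r a : nat) (y : C).
Hypotheses (Hr : (1 <= r)%nat) (Ha : (a < r)%nat) (Hy : INR r * Cmod y ^ r < 1).

Let rho : R := pole_radius r.
Let z : C := / J r.
Let K : C := CI * RtoC (sqrt 2) * RtoC (Rpower (INR r) (- / 2 - / INR r)).
Let D : C := RtoC 1 - RtoC (INR r) * y ^ r.

Lemma Cinv_J_neq_0 : z <> RtoC 0.
Proof.
  intro E. pose proof (Cinv_r (J r) (J_neq_0 r)) as H. fold z in H.
  rewrite E, Cmult_0_r in H. apply RtoC_inj in H. lra.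
Qed.

Lemma one_sub_mul_pow_neq_0 : D <> RtoC 0.
Proof.
  intro E. assert (Cmod (RtoC (INR r) * y ^ r)%C = 1).
  { replace (RtoC (INR r) * y ^ r)%C with (RtoC 1 - D)%C by (unfold D; ring).
    rewrite E. replace (RtoC 1 - RtoC 0)%C with (RtoC 1) by ring. apply Cmod_1. }
  rewrite Cmod_mult, Cmod_R, Cmod_pow, Rabs_right in H by (apply Rle_ge, pos_INR). lra.
Qed.

(* [Hy] says [|y| < rho], so [y] is none of the poles. *)
Lemma pole_sub_neq_0 i : (RtoC rho * / z ^ i - y)%C <> RtoC 0.
Proof.
  intros E. assert (Ey : y = (RtoC rho * / z ^ i)%C).
  { replace y with (RtoC rho * / z ^ i - (RtoC rho * / z ^ i - y))%C by ring.
    rewrite E. ring. }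
  assert (Hz1 : Cmod z = 1) by (unfold z; rewrite Cmod_inv, Cmod_J by apply J_neq_0; apply Rinv_1).
  assert (0 < rho) by apply pole_radius_pos.
  rewrite Ey, Cmod_mult, Cmod_inv, Cmod_pow, Hz1, pow1, Rinv_1, Rmult_1_r, Cmod_R, Rabs_right
    in Hy by (auto using Cpow_nz, Cinv_J_neq_0; lra).
  unfold rho in Hy. rewrite pole_radius_pow, Rinv_r in Hy by (auto; apply not_0_INR; lia). lra.
Qed.

Lemma xi_tilde_term_expansion i :
  (/ RtoC (INR r) * (/ J r) ^ ((a + 1) * i) * xi r i y)%C =
  (/ RtoC (INR r) * K / D *
   sum_n (fun m => y ^ m * (/ RtoC rho) ^ S m * (z ^ (a + 1 + m)) ^ i) (r - 1))%C.
Proof.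
  assert (Hrho : 0 < rho) by apply pole_radius_pos.
  set (w := (z ^ i)%C).
  assert (Hw : w <> RtoC 0) by (apply Cpow_nz, Cinv_J_neq_0).
  assert (HJ : (J r ^ i)%C = (/ w)%C).
  { unfold w, z. rewrite Cpow_inv by apply J_neq_0. field. apply Cpow_nz, J_neq_0. }
  assert (HzR : (z ^ r)%C = RtoC 1) by now apply Cinv_J_pow_r.
  assert (Hwr : (w ^ r)%C = RtoC 1)
    by (unfold w; rewrite <- Cpow_mult_r, Nat.mul_comm, Cpow_mult_r, HzR; apply Cpow_1_l).
  unfold xi. change (Rpower (INR r) (- / INR r)) with rho. fold K. fold z.
  rewrite HJ, Nat.mul_comm, Cpow_mult_r. fold w. unfold Cdiv.
  rewrite (Cinv_sub_root_of_unity w y rho r Hr Hrho Hw Hwr (pole_radius_pow r Hr)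
             (pole_sub_neq_0 i) one_sub_mul_pow_neq_0).
  assert (Hsum : sum_n (fun m => y ^ m * (/ RtoC rho) ^ S m * (z ^ (a + 1 + m)) ^ i)%C (r - 1)
    = (w ^ (a + 1) * / w * sum_n (fun m => y ^ m * (w * / RtoC rho) ^ S m)%C (r - 1))%C).
  { rewrite <- sum_n_Cmult_l. apply sum_n_ext. intros m.
    replace ((z ^ (a + 1 + m)) ^ i)%C with (w ^ (a + 1) * w ^ m)%C
      by (unfold w; rewrite <- !Cpow_mult_r, <- Cpow_add_r; f_equal; ring).
    rewrite Cpow_mult_l, !Cpow_S.
    match goal with |- ?l = ?r => change (@eq C l r) end.
    field. split; [|auto]. intro E. apply RtoC_inj in E. lra. }
  unfold Cdiv. fold D. rewrite Hsum. sum_ring.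
Qed.

(* Summing over [i] filters the residue class of the exponent of [y] modulo [r]:
   only [m = r - a - 1] survives. *)
Lemma xi_tilde_closed_form :
  xi_tilde r a y =
  (CI * RtoC (sqrt 2) * RtoC (Rpower (INR r) (/ 2 - INR (a + 1) / INR r))
   * (y ^ (r - a - 1) / (RtoC 1 - RtoC (INR r) * y ^ r)))%C.
Proof.
  assert (Hrho : 0 < rho) by apply pole_radius_pos.
  assert (HzR : (z ^ r)%C = RtoC 1) by now apply Cinv_J_pow_r.
  unfold xi_tilde. rewrite (sum_n_ext _ _ _ xi_tilde_term_expansion), sum_n_Cmult_l.
  rewrite (sum_n_switch (fun i m => y ^ m * (/ RtoC rho) ^ S m * (z ^ (a + 1 + m)) ^ i)%C).
  rewrite (sum_n_ext _ (fun m => y ^ m * (/ RtoC rho) ^ S m *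
     (if Ceq_dec (z ^ (a + 1 + m)) (RtoC 1) then RtoC (INR r) else RtoC 0))%C).
  2:{ intros m. rewrite <- sum_n_root_of_unity; [apply sum_n_Cmult_l | auto |].
      rewrite <- Cpow_mult_r, Nat.mul_comm, Cpow_mult_r, HzR. apply Cpow_1_l. }
  rewrite (sum_n_single _ (r - 1) (r - a - 1)); [|lia|].
  2:{ intros m Hm Hmc. destruct (Ceq_dec _ _) as [E|E]; [|sum_ring].
      exfalso. revert E. apply Cinv_J_pow_neq_1; lia. }
  replace (a + 1 + (r - a - 1))%nat with r by lia.
  destruct (Ceq_dec _ _) as [_|E]; [|contradiction].
  replace (S (r - a - 1)) with (r - a)%nat by lia.
  rewrite <- Rpower_mul_inv_pole_radius_pow by auto. change (pole_radius r) with rho.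
  rewrite RtoC_mult, RtoC_pow, RtoC_inv by lra.
  pose proof one_sub_mul_pow_neq_0.
  assert (RtoC (INR r) <> RtoC 0) by (intro E; apply RtoC_inj, (not_0_INR r) in E; [auto | lia]).
  assert (RtoC rho <> RtoC 0) by (intro E; apply RtoC_inj in E; lra).
  unfold K, D in *. field. auto.
Qed.

End XiTilde.

Lemma pow_le_base x n : 0 <= x <= 1 -> (1 <= n)%nat -> x ^ n <= x.
Proof.
  intros Hx Hn. replace n with (S (n - 1)) by lia. simpl.
  assert (x ^ (n - 1) <= 1) by (rewrite <- (pow1 (n - 1)); apply pow_incr; lra).
  assert (0 <= x ^ (n - 1)) by (apply pow_le; lra). nra.
Qed.

Lemma mul_Cmod_pow_lt_1 (y : C) r : (1 <= r)%nat -> Cmod y < / (16 * INR r) ->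
  16 * INR r * Cmod (y ^ r) < 1.
Proof.
  intros Hr Hy.
  assert (HrR : 1 <= INR r) by (apply (le_INR 1); auto).
  assert (/ (16 * INR r) <= 1) by (rewrite <- Rinv_1; apply Rinv_le_contravar; lra).
  pose proof (Cmod_ge_0 y).
  rewrite Cmod_pow. apply Rle_lt_trans with (16 * INR r * Cmod y).
  - apply Rmult_le_compat_l; [lra | apply pow_le_base; [lra | auto]].
  - apply (Rmult_lt_compat_l (16 * INR r)) in Hy; [|lra]. rewrite Rinv_r in Hy; lra.
Qed.

(* On the curve [e^x = y e^(-y^r)], [e^(M x) = y^M e^(-M y^r)]; with [M = r n + c]
   the [n]-th term of the series is [y^c] times the [n]-th term of Lagrange's
   series at [u = y^r]. *)
Lemma series_term_on_curve (x y : C) r c n : Cexp x = (y * Cexp (- y ^ r))%C ->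
  (RtoC (INR (r * n + c) ^ n / INR (fact n)) * Cexp (RtoC (INR (r * n + c)) * x))%C =
  (y ^ c * (exp_term (RtoC (INR r * INR n + INR c) * y ^ r) n
            * Cexp (RtoC (- (INR r * INR n + INR c)) * y ^ r)))%C.
Proof.
  intros Hx.
  rewrite Cexp_natmul, Hx, Cpow_mult_l, <- Cexp_natmul, plus_INR, mult_INR.
  replace (y ^ (r * n + c))%C with (y ^ c * (y ^ r) ^ n)%C
    by (rewrite Cpow_add_r, Cpow_mult_r; ring).
  set (m := INR r * INR n + INR c).
  replace (RtoC m * - y ^ r)%C with (RtoC (- m) * y ^ r)%C by (rewrite RtoC_opp; ring).
  unfold exp_term, Rdiv. rewrite Cpow_mult_l, !RtoC_mult, RtoC_pow. ring.
Qed.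

Theorem lemma4p5 (r a : nat) :
  (1 <= r)%nat -> (a < r)%nat ->
  exists delta : R, 0 < delta /\
    forall x y : C,
      0 < Cmod y < delta ->
      Cexp x = (y * Cexp (- Cpow y r))%C ->
      exists S : C,
        is_series
          (fun n : nat =>
             (RtoC (pow (INR (r * n + r - a - 1)) n / INR (Factorial.fact n))
              * Cexp (RtoC (INR (r * n + r - a - 1)) * x))%C)
          S /\
        xi_tilde r a y =
          (CI * RtoC (sqrt 2)
           * RtoC (Rpower (INR r) (/ 2 - INR (a + 1) / INR r)) * S)%C.
Proof.
  intros Hr Ha.
  assert (HrR : 0 < INR r) by (apply lt_0_INR; lia).
  exists (/ (16 * INR r)). split; [apply Rinv_0_lt_compat; lra|].
  intros x y [_ Hy] Hx.
  pose proof (mul_Cmod_pow_lt_1 y r Hr Hy) as Hu.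
  set (c := (r - a - 1)%nat).
  exists (y ^ c / (RtoC 1 - RtoC (INR r) * y ^ r))%C. split.
  - pose proof (is_series_lagrange (INR r) (INR c) (y ^ r) (pos_INR r) (pos_INR c)
                  ltac:(lra)) as H.
    apply (is_series_scal (y ^ c)%C) in H.
    eapply is_series_ext; [|exact H]. intros n.
    replace (r * n + r - a - 1)%nat with (r * n + c)%nat by (unfold c; lia).
    symmetry. exact (series_term_on_curve x y r c n Hx).
  - rewrite xi_tilde_closed_form; auto.
    rewrite <- Cmod_pow. pose proof (Cmod_ge_0 (y ^ r)). nra.
Qed.
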